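(* For $n>0$ and $J\subseteq S$, there is a bijection from the set $\mathrm{NN}_n^J$ of $J$-nonnesting partitions of $[n]$ to the set of order ideals of the parabolic root poset $\Phi_+^J$.
   Context: $S=\{s_1,\dots,s_{n-1}\}$ with $s_i=(i,i+1)$ the adjacent transpositions of $\mathfrak{S}_n$. For $J\subseteq S$, writing $J=S\setminus\{s_{j_1},\dots,s_{j_r}\}$ with $j_1<\dots<j_r$, the $J$-regions are $\{1,\dots,j_1\},\{j_1+1,\dots,j_2\},\dots,\{j_r+1,\dots,n\}$. For a set partition $\mathbf P$ of $[n]$, a bump is a pair $(a,b)$, $a<b$, with $a,b$ in the same part and no element of that part strictly between them. $\mathbf P$ is $J$-nonnesting if (NN1) no two distinct elements of the same $J$-region lie in the same part, and (NN2) there are no two distinct bumps $(i_1,i_2),(j_1,j_2)$ with $i_1<j_1<j_2<i_2$. The root poset of $\mathfrak{S}_n$ is the set of transpositions $(i,j)$, $1\le i<j\le n$, ordered by $(i_1,i_2)\le(j_1,j_2)$ iff $i_1\ge j_1$ and $i_2\le j_2$. The parabolic root poset $\Phi_+^J$ is the order filter of the root poset generated by the adjacent transpositions $s_j=(j,j+1)$ with $s_j\notin J$ (with the induced order). *)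

From mathcomp Require Import all_boot.
Set Implicit Arguments. Unset Strict Implicit. Unset Printing Implicit Defensive.

(* Conventions (0-indexed): [n] is 'I_n (element i stands for i+1).
   A subset J of S = {s_1,...,s_(n-1)} is a set J : {set 'I_n.-1}, where
   k : 'I_n.-1 stands for s_(k+1) = (k+1, k+2), i.e. the transposition
   swapping the 0-indexed elements k and k+1 of 'I_n. *)

Section Defs.
Variable n : nat.

(* a and b lie in the same J-region: no region boundary s_k (k not in J)
   separates them, i.e. every s_k with min a b <= k < max a b lies in J. *)
Definition same_region (J : {set 'I_n.-1}) (a b : 'I_n) : bool :=
  [forall k : 'I_n.-1, ((minn a b <= k) && (k < maxn a b)) ==> (k \in J)].

Definition set_partition (P : {set {set 'I_n}}) : bool :=
  partition P [set: 'I_n].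

Definition bump (P : {set {set 'I_n}}) (a b : 'I_n) : bool :=
  (a < b) && [exists B in P, [&& a \in B, b \in B &
                              [forall c in B, ~~ ((a < c) && (c < b))]]].

Definition NN1 (J : {set 'I_n.-1}) (P : {set {set 'I_n}}) : bool :=
  [forall B in P, forall a in B, forall b in B,
     (a != b) ==> ~~ same_region J a b].

Definition NN2 (P : {set {set 'I_n}}) : bool :=
  [forall i1 : 'I_n, forall i2 : 'I_n, forall j1 : 'I_n, forall j2 : 'I_n,
     [&& bump P i1 i2, bump P j1 j2 & (i1, i2) != (j1, j2)] ==>
       ~~ [&& i1 < j1, j1 < j2 & j2 < i2]].

Definition J_nonnesting (J : {set 'I_n.-1}) (P : {set {set 'I_n}}) : bool :=
  [&& set_partition P, NN1 J P & NN2 P].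

Definition NNset (J : {set 'I_n.-1}) : {set {set {set 'I_n}}} :=
  [set P | J_nonnesting J P].

(* root poset: transpositions (i,j), i<j, encoded as pairs *)
Definition is_root (r : 'I_n * 'I_n) : bool := r.1 < r.2.

Definition root_le (r s : 'I_n * 'I_n) : bool :=
  (s.1 <= r.1) && (r.2 <= s.2).

Definition simple_root (k : 'I_n.-1) (r : 'I_n * 'I_n) : bool :=
  (nat_of_ord r.1 == k) && (nat_of_ord r.2 == k.+1).

Definition PhiJ (J : {set 'I_n.-1}) : {set 'I_n * 'I_n} :=
  [set r | is_root r &&
     [exists k : 'I_n.-1, exists g : 'I_n * 'I_n,
        [&& k \notin J, simple_root k g & root_le g r]]].

Definition order_ideal (J : {set 'I_n.-1}) (A : {set 'I_n * 'I_n}) : bool :=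
  (A \subset PhiJ J) &&
  [forall x in PhiJ J, forall y in PhiJ J,
     (root_le x y && (y \in A)) ==> (x \in A)].

Definition idealset (J : {set 'I_n.-1}) : {set {set 'I_n * 'I_n}} :=
  [set A | order_ideal J A].

End Defs.

(* Send a partition P to the order ideal of PhiJ generated by its bumps.
   By (NN1) a bump (a, b) crosses a J-region boundary, so it lies in PhiJ; by (NN2)
   and the block structure the bumps form an antichain, hence they are recovered as
   the maximal elements of the ideal, and P is recovered from its bumps as the
   connected components of the graph they span.  Conversely, the maximal elements
   of an ideal form an antichain M; in an antichain every point is the left end of
   at most one arc and the right end of at most one arc, so each component of the
   graph spanned by M is an increasing chain whose consecutive pairs are exactly
   the arcs of M.  The resulting partition therefore has bump set M and is
   J-nonnesting. *)

From Pilot Require Import Defs.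
From mathcomp Require Import all_boot zify.
Set Implicit Arguments. Unset Strict Implicit. Unset Printing Implicit Defensive.

Section RootOrder.
Variable n : nat.
Implicit Types (x y z : 'I_n * 'I_n) (Phi M A : {set 'I_n * 'I_n}).

Lemma root_le_refl x : root_le x x.
Proof. by rewrite /root_le !leqnn. Qed.

Lemma root_le_trans x y z : root_le x y -> root_le y z -> root_le x z.
Proof. by rewrite /root_le => /andP[? ?] /andP[? ?]; apply/andP; split; lia. Qed.

Lemma root_le_anti x y : root_le x y -> root_le y x -> x = y.
Proof.
case: x y => [a b] [c d]; rewrite /root_le /= => /andP[? ?] /andP[? ?].
by congr pair; apply: ord_inj; lia.
Qed.

Lemma root_le_root x y : root_le x y -> is_root x -> is_root y.
Proof. by rewrite /root_le /is_root => /andP[? ?] ?; lia. Qed.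

Lemma root_le_length x y : is_root x -> root_le x y ->
  y.2 - y.1 <= x.2 - x.1 -> y = x.
Proof.
case: x y => [a b] [c d]; rewrite /root_le /is_root /= => ? /andP[? ?] ?.
by congr pair; apply: ord_inj; lia.
Qed.

Definition root_antichain M := {in M &, forall x y, root_le x y -> x = y}.

Definition down_closure Phi M : {set 'I_n * 'I_n} :=
  [set x in Phi | [exists y in M, root_le x y]].

Definition maximal_roots A : {set 'I_n * 'I_n} :=
  [set y in A | [forall z in A, root_le y z ==> (z == y)]].

Lemma maximal_roots_sub A : maximal_roots A \subset A.
Proof. by apply/subsetP=> y; rewrite inE => /andP[]. Qed.

Lemma maximal_roots_antichain A : root_antichain (maximal_roots A).
Proof.
move=> x y; rewrite !inE => /andP[_ /forallP/(_ y) xmax] /andP[yA _] xy.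
by apply/esym/eqP; move: xmax; rewrite yA xy.
Qed.

Lemma maximal_down_closure Phi M : M \subset Phi -> root_antichain M ->
  maximal_roots (down_closure Phi M) = M.
Proof.
move=> /subsetP M_Phi M_antichain.
have M_down y : y \in M -> y \in down_closure Phi M.
  by move=> yM; rewrite inE M_Phi //=; apply/existsP; exists y; rewrite yM root_le_refl.
apply/setP=> y; rewrite inE; apply/andP/idP => [[yD /forallP ymax] | yM].
- move: yD; rewrite inE => /andP[_ /existsP[w /andP[wM yw]]].
  by move: (ymax w); rewrite M_down // yw /= => /eqP <-.
- split; first exact: M_down.
  apply/forallP=> z; apply/implyP; rewrite inE => /andP[_ /existsP[w /andP[wM zw]]].
  apply/implyP=> yz; have yw := root_le_trans yz zw.
  rewrite -(M_antichain _ _ yM wM yw) in zw.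
  by rewrite (root_le_anti zw yz).
Qed.

End RootOrder.

Section ParabolicRoots.
Variables (n : nat) (J : {set 'I_n.-1}).
Implicit Types (x y : 'I_n * 'I_n) (M A : {set 'I_n * 'I_n}).

Lemma same_region_sym (a b : 'I_n) : same_region J a b = same_region J b a.
Proof. by rewrite /same_region minnC maxnC. Qed.

Lemma PhiJ_region (a b : 'I_n) : a < b ->
  ((a, b) \in PhiJ J) = ~~ same_region J a b.
Proof.
move=> ab; rewrite inE /is_root /= ab /= /same_region negb_forall.
rewrite (minn_idPl (ltnW ab)) (maxn_idPr (ltnW ab)).
apply/existsP/existsP=> [[k /existsP[g]] | [k]].
- rewrite /simple_root /root_le => /and3P[kJ /andP[/eqP g1 /eqP g2] /andP[ag gb]].
  exists k; rewrite negb_imply kJ andbT.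
  by move: ag gb => /= ? ?; apply/andP; split; lia.
- rewrite negb_imply => /andP[/andP[ak kb] kJ]; exists k.
  have k_lt : k < n by apply: ltn_trans kb (ltn_ord b).
  have k1_lt : k.+1 < n by apply: leq_ltn_trans kb (ltn_ord b).
  apply/existsP; exists (Ordinal k_lt, Ordinal k1_lt).
  by rewrite kJ /simple_root /root_le /= !eqxx ak kb.
Qed.

Lemma PhiJ_up x y : x \in PhiJ J -> root_le x y -> y \in PhiJ J.
Proof.
rewrite !inE => /andP[xr /existsP[k /existsP[g /and3P[kJ kg gx]]]] xy.
rewrite (root_le_root xy xr); apply/existsP; exists k; apply/existsP; exists g.
by rewrite kJ kg (root_le_trans gx xy).
Qed.

Lemma down_closure_ideal M : order_ideal J (down_closure (PhiJ J) M).
Proof.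
apply/andP; split; first by apply/subsetP=> x; rewrite inE => /andP[].
apply/forallP=> x; apply/implyP=> xPhi; apply/forallP=> y; apply/implyP=> _.
apply/implyP=> /andP[xy]; rewrite inE => /andP[_ /existsP[w /andP[wM yw]]].
by rewrite inE xPhi; apply/existsP; exists w; rewrite wM (root_le_trans xy yw).
Qed.

Lemma down_closure_maximal A : order_ideal J A ->
  down_closure (PhiJ J) (maximal_roots A) = A.
Proof.
case/andP=> /subsetP APhi /forallP A_down; apply/setP=> x; rewrite inE.
apply/andP/idP=> [[xPhi /existsP[y /andP[yM xy]]] | xA].
  have yA := subsetP (maximal_roots_sub A) y yM.
  have /implyP/(_ xPhi)/forall_inP/(_ y (APhi y yA)) := A_down x.
  by rewrite xy yA => /implyP; apply.
split; first exact: APhi.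
(* Among the roots of A above x, one of maximal height is maximal in A. *)
have x_up : (x \in A) && root_le x x by rewrite xA root_le_refl.
have [y /andP[yA xy] ymax] :=
  @arg_maxnP _ x [pred y | (y \in A) && root_le x y] (fun y => y.2 - y.1) x_up.
apply/existsP; exists y; rewrite xy andbT inE yA; apply/forall_inP=> z zA.
apply/implyP=> yz; apply/eqP; apply: (root_le_length _ yz (ymax z _)).
  by have := APhi y yA; rewrite inE => /andP[].
by rewrite inE zA (root_le_trans xy yz).
Qed.

End ParabolicRoots.

Section Arcs.
Variables (n : nat) (M : {set 'I_n * 'I_n}).

Definition arc_rel : rel 'I_n := fun x y => ((x, y) \in M) || ((y, x) \in M).

Definition arc_partition : {set {set 'I_n}} :=
  equivalence_partition (connect arc_rel) [set: 'I_n].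

Lemma connect_arc_sym : connect_sym arc_rel.
Proof. by apply: sym_connect_sym => x y; rewrite /arc_rel orbC. Qed.

Lemma connect_arc_equiv : equivalence_rel (connect arc_rel).
Proof.
move=> x y z; split=> [|xy]; first exact: connect0.
by apply/idP/idP; apply: connect_trans; rewrite // connect_arc_sym.
Qed.

Lemma arc_partition_partition : set_partition arc_partition.
Proof. by apply: equivalence_partitionP; apply: in3W connect_arc_equiv. Qed.

Lemma pblock_arc_partition x y :
  (y \in pblock arc_partition x) = connect arc_rel x y.
Proof.
by rewrite pblock_equivalence_partition ?inE //; apply: in3W connect_arc_equiv.
Qed.

Hypothesis M_roots : forall a b, (a, b) \in M -> a < b.
Hypothesis M_antichain : root_antichain M.

Lemma arc_fst_inj a b c : (a, b) \in M -> (a, c) \in M -> b = c.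
Proof.
move=> abM acM; case/orP: (leq_total b c) => h.
- by have := M_antichain abM acM; rewrite /root_le /= h leqnn => /(_ isT) [].
- by have := M_antichain acM abM; rewrite /root_le /= h leqnn => /(_ isT) [].
Qed.

Lemma arc_snd_inj a b c : (a, c) \in M -> (b, c) \in M -> a = b.
Proof.
move=> acM bcM; case/orP: (leq_total a b) => h.
- by have := M_antichain bcM acM; rewrite /root_le /= h leqnn => /(_ isT) [].
- by have := M_antichain acM bcM; rewrite /root_le /= h leqnn => /(_ isT) [].
Qed.

Lemma arc_path_increasing x0 x1 p : uniq [:: x0, x1 & p] -> path arc_rel x1 p ->
  (x0, x1) \in M -> {in p, forall y : 'I_n, x1 < y}.
Proof.
elim: p x0 x1 => [//|x2 p IHp] x0 x1 uniq_p /= /andP[/orP[x12M | x21M] x2p] x01M y.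
- rewrite inE => /predU1P[-> | yp]; first exact: M_roots.
  by apply: ltn_trans (M_roots x12M) (IHp x1 x2 _ x2p x12M y yp); case/andP: uniq_p.
- by move: uniq_p; rewrite (arc_snd_inj x01M x21M) /= !inE eqxx !orbT.
Qed.

Lemma arc_path_decreasing x0 x1 p : uniq [:: x0, x1 & p] -> path arc_rel x1 p ->
  (x1, x0) \in M -> {in p, forall y : 'I_n, y < x1}.
Proof.
elim: p x0 x1 => [//|x2 p IHp] x0 x1 uniq_p /= /andP[/orP[x12M | x21M] x2p] x10M y.
- by move: uniq_p; rewrite (arc_fst_inj x10M x12M) /= !inE eqxx !orbT.
- rewrite inE => /predU1P[-> | yp]; first exact: M_roots.
  by apply: ltn_trans (IHp x1 x2 _ x2p x21M y yp) (M_roots x21M); case/andP: uniq_p.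
Qed.

Lemma connect_arc_ltn a c : connect arc_rel a c -> a < c ->
  exists2 b, (a, b) \in M & b <= c.
Proof.
(* A repetition-free path leaves a along an arc and, since no point is the
   endpoint of two arcs on the same side, then moves monotonically. *)
case/connectP=> p0 p0_path ->{c}; case/shortenP: p0_path => [[|x p]] //=.
  by rewrite ltnn.
move=> /andP[axM xp] uniq_p _ a_last; have := mem_last x p.
rewrite inE => /predU1P[x_last | last_p]; case/orP: axM => [axM | xaM].
- by exists x; rewrite // x_last.
- by have := ltn_trans (M_roots xaM) a_last; rewrite x_last ltnn.
- by exists x; last exact/ltnW/(arc_path_increasing uniq_p xp axM).
- have := arc_path_decreasing uniq_p xp xaM last_p.
  by move/(ltn_trans (ltn_trans (M_roots xaM) a_last)); rewrite ltnn.
Qed.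

End Arcs.

Definition bumps n (P : {set {set 'I_n}}) : {set 'I_n * 'I_n} :=
  [set r | Defs.bump P r.1 r.2].

Lemma mem_bumps n (P : {set {set 'I_n}}) a b : ((a, b) \in bumps P) = Defs.bump P a b.
Proof. by rewrite inE. Qed.

Section SetPartition.
Variables (n : nat) (P : {set {set 'I_n}}).
Hypothesis P_partition : set_partition P.

Let P_trivI : trivIset P.
Proof. by case/and3P: P_partition. Qed.

Let P_cover x : x \in cover P.
Proof. by case/and3P: P_partition => /eqP-> _ _; rewrite inE. Qed.

Lemma bump_pblock a b : Defs.bump P a b =
  [&& a < b, b \in pblock P a & [forall c in pblock P a, ~~ (a < c < b)]].
Proof.
rewrite /Defs.bump; case: (a < b) => //=; apply/existsP/idP=> [[B] | bB].
  by case/and4P=> BP aB bB Bc; rewrite (def_pblock P_trivI BP aB) bB Bc.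
by exists (pblock P a); rewrite pblock_mem // mem_pblock P_cover.
Qed.

Lemma connect_bumps x y : connect (arc_rel (bumps P)) x y = (y \in pblock P x).
Proof.
apply/idP/idP=> [xy | ].
  have Px_closed : closed (arc_rel (bumps P)) (pblock P x).
    move=> u v; rewrite /arc_rel !inE !bump_pblock /= -!eq_pblock //.
    by case/orP=> /and3P[_ /eqP-> _].
  by rewrite -(closed_connect Px_closed xy) mem_pblock.
wlog xy : x y / x < y.
  move=> IH.
  case: (ltngtP x y) => [/IH// | yx yPx | /ord_inj->]; last by rewrite connect0.
  rewrite connect_arc_sym IH // -eq_pblock // eq_sym eq_pblock //.
have [k y_lt_k] := ubnP y; elim: k => // k IHk in y y_lt_k xy *; move=> yPx.
have x_below : (x \in pblock P x) && (x < y) by rewrite mem_pblock P_cover xy.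
have [c /andP[cPx cy] cmax] :=
  @arg_maxnP _ x [pred z | (z \in pblock P x) && (z < y)] (@nat_of_ord n) x_below.
have cyM : arc_rel (bumps P) c y.
  rewrite /arc_rel inE bump_pblock cy (same_pblock P_trivI cPx) yPx /=; apply/orP; left.
  apply/forall_inP=> z zPx; apply/negP=> /andP[cz zy].
  by have := cmax z; rewrite inE zPx zy => /(_ isT) /=; rewrite leqNgt cz.
apply: connect_trans (connect1 cyM).
case: (ltngtP x c) => [xc | | /ord_inj->]; last exact: connect0.
- exact: IHk (leq_trans cy y_lt_k) xc cPx.
- by have := cmax x x_below; rewrite /= leqNgt => /negP.
Qed.

Lemma arc_partition_bumps : arc_partition (bumps P) = P.
Proof.
rewrite -{2}(equivalence_partition_pblock P_partition).
apply: eq_in_imset => x _; apply/setP=> y.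
by rewrite !inE connect_bumps.
Qed.

Lemma bumps_antichain : NN2 P -> root_antichain (bumps P).
Proof.
move=> NN2P [a b] [c d]; rewrite !inE /root_le /= => abP cdP /andP[ca bd].
have := abP; rewrite bump_pblock => /and3P[ab bPa _].
have := cdP; rewrite bump_pblock => /and3P[cd dPc /forall_inP cd_gap].
case: (ltngtP c a) => [c_a | a_c | /ord_inj ac]; last first.
- subst c; case: (ltngtP b d) => [b_d | d_b | /ord_inj-> //].
    by have := cd_gap b bPa; rewrite ab b_d.
  by rewrite leqNgt d_b in bd.
- by rewrite leqNgt a_c in ca.
case: (ltngtP b d) => [b_d | d_b | /ord_inj bd_eq].
- have cd_ab : (c, d) != (a, b) by apply/eqP=> -[ac _]; rewrite ac ltnn in c_a.
  move: NN2P => /forallP/(_ c)/forallP/(_ d)/forallP/(_ a)/forallP/(_ b).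
  by rewrite cdP abP cd_ab c_a ab b_d.
- by rewrite leqNgt d_b in bd.
- subst d; have aPc : a \in pblock P c.
    by rewrite -(same_pblock P_trivI dPc) (same_pblock P_trivI bPa) mem_pblock.
  by have := cd_gap a aPc; rewrite c_a ab.
Qed.

End SetPartition.

Lemma bumps_PhiJ n (J : {set 'I_n.-1}) (P : {set {set 'I_n}}) :
  NN1 J P -> bumps P \subset PhiJ J.
Proof.
move=> /forall_inP NN1P; apply/subsetP=> -[a b].
rewrite inE => /andP[/= ab /exists_inP[B BP /and3P[aB bB _]]].
rewrite PhiJ_region //; apply: (implyP (forall_inP (forall_inP (NN1P B BP) a aB) b bB)).
by rewrite neq_ltn ab.
Qed.

Lemma bumps_arc_partition n (M : {set 'I_n * 'I_n}) :
  (forall a b, (a, b) \in M -> a < b) -> root_antichain M ->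
  bumps (arc_partition M) = M.
Proof.
move=> M_roots M_antichain; apply/setP=> -[a b].
rewrite inE bump_pblock ?arc_partition_partition //= pblock_arc_partition.
apply/and3P/idP=> [[ab ab_conn /forall_inP ab_gap] | abM].
  have [b' ab'M b'b] := connect_arc_ltn M_roots M_antichain ab_conn ab.
  case: (ltngtP b' b) => [b'_b | b_b' | /ord_inj <- //]; last first.
    by rewrite ltnNge b'b in b_b'.
  have ab'_conn : connect (arc_rel M) a b' by rewrite connect1 // /arc_rel ab'M.
  have := ab_gap b'; rewrite pblock_arc_partition ab'_conn => /(_ isT).
  by rewrite (M_roots _ _ ab'M) b'_b.
split; [exact: M_roots _ _ abM | by rewrite connect1 // /arc_rel abM |].
apply/forall_inP=> c; rewrite pblock_arc_partition => ac_conn; apply/andP=> -[ac cb].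
have [b' ab'M b'c] := connect_arc_ltn M_roots M_antichain ac_conn ac.
by move: cb; rewrite -(arc_fst_inj M_antichain ab'M abM) ltnNge b'c.
Qed.

Lemma arc_partition_nonnesting n (J : {set 'I_n.-1}) (M : {set 'I_n * 'I_n}) :
  M \subset PhiJ J -> root_antichain M -> J_nonnesting J (arc_partition M).
Proof.
move=> /subsetP M_PhiJ M_antichain.
have M_roots a b : (a, b) \in M -> a < b.
  by move=> /M_PhiJ; rewrite inE => /andP[].
have P_partition := arc_partition_partition M.
apply/and3P; split=> //.
- apply/forall_inP=> B BP; apply/forall_inP=> a aB; apply/forall_inP=> b bB.
  have ab_conn : connect (arc_rel M) a b.
    by rewrite -pblock_arc_partition (def_pblock _ BP aB) //; case/and3P: P_partition.
  apply/implyP; wlog ab : a b aB bB ab_conn / a < b.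
    move=> IH; case: (ltngtP a b) => [ab | ba | /ord_inj->]; last by rewrite eqxx.
      exact: IH.
    by rewrite same_region_sym eq_sym; apply: IH; rewrite // connect_arc_sym.
  move=> _; have [b' ab'M b'b] := connect_arc_ltn M_roots M_antichain ab_conn ab.
  rewrite -PhiJ_region //; apply: PhiJ_up (M_PhiJ _ ab'M) _.
  by rewrite /root_le /= leqnn b'b.
- apply/forallP=> i1; apply/forallP=> i2; apply/forallP=> j1; apply/forallP=> j2.
  have bumpM a b : Defs.bump (arc_partition M) a b = ((a, b) \in M).
    by rewrite -mem_bumps bumps_arc_partition.
  rewrite !bumpM; apply/implyP=> /and3P[iM jM ij_ne]; apply/and3P=> -[i1j1 j1j2 j2i2].
  have ji : root_le (j1, j2) (i1, i2) by rewrite /root_le /= ltnW // ltnW.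
  by move: ij_ne; rewrite (M_antichain _ _ jM iM ji) eqxx.
Qed.

Section BumpIdeal.
Variables (n : nat) (J : {set 'I_n.-1}).

Definition bump_ideal (P : {set {set 'I_n}}) := down_closure (PhiJ J) (bumps P).

Lemma maximal_bump_ideal P : J_nonnesting J P -> maximal_roots (bump_ideal P) = bumps P.
Proof.
case/and3P=> P_part P_NN1 P_NN2.
exact: maximal_down_closure (bumps_PhiJ P_NN1) (bumps_antichain P_part P_NN2).
Qed.

Lemma bump_ideal_inj : {in NNset J &, injective bump_ideal}.
Proof.
move=> P Q; rewrite !inE => P_NN Q_NN PQ.
have [[P_part _ _] [Q_part _ _]] := (and3P P_NN, and3P Q_NN).
rewrite -(arc_partition_bumps P_part) -(arc_partition_bumps Q_part).
by rewrite -(maximal_bump_ideal P_NN) -(maximal_bump_ideal Q_NN) PQ.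
Qed.

Lemma bump_ideal_onto A :
  order_ideal J A -> exists2 P, P \in NNset J & bump_ideal P = A.
Proof.
move=> A_ideal; set M := maximal_roots A.
have M_PhiJ : M \subset PhiJ J.
  by apply: subset_trans (maximal_roots_sub A) _; case/andP: A_ideal.
have M_antichain : root_antichain M by exact: maximal_roots_antichain.
have M_roots a b : (a, b) \in M -> a < b.
  by move/(subsetP M_PhiJ); rewrite inE => /andP[].
exists (arc_partition M); first by rewrite inE arc_partition_nonnesting.
by rewrite /bump_ideal bumps_arc_partition // down_closure_maximal.
Qed.

End BumpIdeal.

Theorem lemma5p2 (n : nat) (J : {set 'I_n.-1}) :
  0 < n ->
  exists f : {set {set 'I_n}} -> {set 'I_n * 'I_n},
    {in NNset J &, injective f} /\ f @: NNset J = idealset J.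
Proof.
move=> _; exists (bump_ideal J); split; first exact: bump_ideal_inj.
apply/setP=> A; rewrite inE; apply/imsetP/idP=> [[P _ ->] | /bump_ideal_onto[P PNN <-]].
  exact: down_closure_ideal.
by exists P.
Qed.
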